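(* Let $G$ be a finite group and $p$ a prime such that $G$ has no redundant Sylow $p$-subgroup. Then $|G_p|\geq \nu_p(G)$.
   Context: For a finite group $G$ and a prime $p$, $G_p$ denotes the set of $p$-elements of $G$, $\mathrm{Syl}_p(G)$ the set of Sylow $p$-subgroups of $G$, and $\nu_p(G)=|\mathrm{Syl}_p(G)|$. $G$ is said to have a redundant Sylow $p$-subgroup if $G_p$ is contained in the union of the members of some proper subset of $\mathrm{Syl}_p(G)$. *)

From mathcomp Require Import all_boot all_fingroup all_solvable.
Set Implicit Arguments. Unset Strict Implicit. Unset Printing Implicit Defensive.
Local Open Scope group_scope.

Definition p_elements (gT : finGroupType) (p : nat) (G : {set gT}) : {set gT} :=
  [set x in G | p.-elt x].

Definition nu (gT : finGroupType) (p : nat) (G : {set gT}) : nat := #|'Syl_p(G)|.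

Definition has_redundant_sylow (gT : finGroupType) (p : nat) (G : {set gT}) : Prop :=
  exists S : {set {group gT}},
    S \proper 'Syl_p(G) /\ p_elements p G \subset \bigcup_(P in S) P.

From mathcomp Require Import all_boot all_fingroup all_solvable.
Set Implicit Arguments. Unset Strict Implicit. Unset Printing Implicit Defensive.
Local Open Scope group_scope.

(* Every p-element lies in a Sylow p-subgroup, so Syl_p(G) covers G_p. If no
   proper subfamily covers G_p, each Sylow p-subgroup P contains a p-element
   lying in no other Sylow p-subgroup (otherwise Syl_p(G) minus P would still
   cover G_p). Hence any map sending a p-element to a Sylow p-subgroup containing
   it is onto Syl_p(G), whence nu_p(G) <= |G_p|. *)

Section IrredundantCover.

Variables (I T : finType) (F : I -> {set T}) (S : {set I}) (A : {set T}).

Hypothesis coverA : A \subset \bigcup_(i in S) F i.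
Hypothesis irredundant :
  forall S' : {set I}, S' \proper S -> ~ A \subset \bigcup_(i in S') F i.

Definition private_to (i : I) (x : T) :=
  [&& x \in A, x \in F i & [forall j in S, (x \in F j) ==> (j == i)]].

Lemma irredundant_cover_private i : i \in S -> exists x, private_to i x.
Proof.
move=> Si; apply/existsP; apply: contraT => /existsPn no_private.
exfalso; apply: (irredundant (properD1 Si)); apply/subsetP => x Ax.
have /bigcupP[j Sj xFj] := subsetP coverA x Ax.
have [eq_ji | neq_ji] := eqVneq j i; last first.
  by apply/bigcupP; exists j => //; rewrite !inE neq_ji.
have := no_private x; rewrite /private_to Ax -eq_ji xFj /=.
case/forall_inPn=> k Sk; rewrite negb_imply => /andP[xFk neq_kj].
by apply/bigcupP; exists k => //; rewrite !inE neq_kj.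
Qed.

Lemma leq_card_irredundant_cover : #|S| <= #|A|.
Proof.
pose owner x := [pick i in S | x \in F i].
have S_owned : Some @: S \subset owner @: A.
  apply/subsetP => _ /imsetP[i Si ->].
  have [x /and3P[Ax xFi /forall_inP only_i]] := irredundant_cover_private Si.
  apply/imsetP; exists x => //; rewrite /owner.
  case: pickP => [j /andP[Sj /(implyP (only_i j Sj))/eqP ->] // | /(_ i)].
  by rewrite Si xFi.
rewrite -(card_imset _ (@Some_inj _)).
exact: leq_trans (subset_leq_card S_owned) (leq_imset_card _ _).
Qed.

End IrredundantCover.

Lemma p_elements_sub_Syl_cover (gT : finGroupType) (G : {group gT}) (p : nat) :
  p_elements p G \subset \bigcup_(P in 'Syl_p(G)) P.
Proof.
apply/subsetP => x; rewrite inE => /andP[Gx p_x].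
have sxG : <[x]> \subset G by rewrite cycle_subG.
have [P sylP xP] := Sylow_superset sxG p_x.
by apply/bigcupP; exists P; rewrite ?inE // -cycle_subG.
Qed.

Theorem corollary2p7 (gT : finGroupType) (G : {group gT}) (p : nat) :
  prime p -> ~ has_redundant_sylow p G -> nu p G <= #|p_elements p G|.
Proof.
move=> _ no_redundant; rewrite /nu.
apply: (@leq_card_irredundant_cover _ _ (@gval gT)).
  exact: p_elements_sub_Syl_cover.
by move=> S properS coverS; apply: no_redundant; exists S.
Qed.
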